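(* Let $a\geq 1$ and $n,p>1$ be integers and let $G$ be a regular graph. Then $apG\circ nK_1$ is distance magic if and only if $aH_{n,p}\otimes G$ is distance magic.
   Context: A graph $G$ on $v$ vertices is distance magic if there is a bijection $f:V(G)\to\{1,\ldots,v\}$ and a constant $k$ such that for every vertex $x$, $\sum_{y\in N(x)}f(y)=k$, where $N(x)$ is the set of neighbours of $x$. $H_{n,p}$ denotes the complete multipartite graph with $p$ partite sets each of size $n$; $cH$ denotes the disjoint union of $c$ copies of $H$; $nK_1$ is the edgeless graph on $n$ vertices. The lexicographic product $G\circ H$ has vertex set $V(G)\times V(H)$, with $(g,h)\sim(g',h')$ iff $gg'\in E(G)$, or $g=g'$ and $hh'\in E(H)$. The Kronecker (tensor) product $G\otimes H$ has vertex set $V(G)\times V(H)$, with $(g,h)\sim(g',h')$ iff $gg'\in E(G)$ and $hh'\in E(H)$. *)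

From mathcomp Require Import all_boot.
Unset Printing Implicit Defensive.

Definition simple_graph {V : finType} (adj : rel V) : Prop :=
  symmetric adj /\ irreflexive adj.

Definition regular {V : finType} (adj : rel V) : Prop :=
  exists r : nat, forall x : V, #|[pred y | adj x y]| = r.

(* distance magic: a bijection f : V -> {1,...,|V|} (encoded as
   x |-> (f x).+1 with f : V -> 'I_#|V| bijective) and a constant k such that
   the labels of the neighbours of every vertex sum to k. *)
Definition distance_magic {V : finType} (adj : rel V) : Prop :=
  exists f : V -> 'I_#|V|, bijective f /\
    exists k : nat, forall x : V, \sum_(y | adj x y) (f y).+1 = k.

Definition copies (c : nat) {V : finType} (adj : rel V) : rel ('I_c * V) :=
  fun u w => (u.1 == w.1) && adj u.2 w.2.

Definition edgeless (n : nat) : rel 'I_n := fun _ _ => false.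

(* H_{n,p} : complete multipartite graph with p parts of size n;
   vertex (i, j) is the j-th vertex of the i-th part *)
Definition Hnp (n p : nat) : rel ('I_p * 'I_n) :=
  fun u w => u.1 != w.1.

Definition lexprod {V W : finType} (adjG : rel V) (adjH : rel W) : rel (V * W) :=
  fun u w => adjG u.1 w.1 || ((u.1 == w.1) && adjH u.2 w.2).

Definition kronprod {V W : finType} (adjG : rel V) (adjH : rel W) : rel (V * W) :=
  fun u w => adjG u.1 w.1 && adjH u.2 w.2.

From mathcomp Require Import all_boot.

(* Identify the a*p copies of G with the pairs (b, i) of a copy b of H_{n,p}
   and a part i of it; then both graphs live on the same vertices ((b, i, j), v)
   and a labelling of one is a labelling of the other.  For a labelling l write
   s((b, i), v) for the sum of l over the n deg(v) vertices ((b, i, j'), y) with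
   y ~ v.  The weight of ((b, i, j), v) is s((b, i), v) in apG o nK_1 and
   \sum_(i' <> i) s((b, i'), v) in aH_{n,p} (x) G.  The first is constant (= k)
   iff the second is (= (p - 1) k): since p > 1, if all the sums of the
   s((b, i'), v) omitting one term agree, then all the terms agree. *)

Definition weight {X : finType} (adj : rel X) (l : X -> nat) (x : X) : nat :=
  \sum_(y | adj x y) l y.

Definition constant_weight {X : finType} (adj : rel X) (l : X -> nat) : Prop :=
  exists k, forall x, weight adj l x = k.

Lemma eq_constant_weight {X : finType} (adj : rel X) (l l' : X -> nat) :
  l =1 l' -> constant_weight adj l -> constant_weight adj l'.
Proof.
move=> eq_l [k wk]; exists k => x; rewrite -(wk x).
by apply: eq_bigr => y _; rewrite eq_l.
Qed.

Lemma cast_ord_bij {m n : nat} (E : m = n) : bijective (cast_ord E).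
Proof. by exists (cast_ord (esym E)); [exact: cast_ordK | exact: cast_ordKV]. Qed.

Lemma distance_magic_bij {X Y : finType} (adj : rel Y) (psi : Y -> X) :
  bijective psi ->
  distance_magic adj <->
  exists f : X -> 'I_#|X|, bijective f /\
    constant_weight adj (fun y => (f (psi y)).+1).
Proof.
move=> psi_bij; have eq_card := bij_eq_card psi_bij.
have [psi' psiK _] := psi_bij.
have psi'_bij := bij_can_bij psi_bij psiK.
split=> [[h [h_bij h_const]] | [f [f_bij f_const]]].
- exists (cast_ord eq_card \o h \o psi'); split.
    by do 2 apply: bij_comp => //; exact: cast_ord_bij.
  by apply: eq_constant_weight h_const => y /=; rewrite psiK.
- exists (cast_ord (esym eq_card) \o f \o psi); split=> //.
  by do 2 apply: bij_comp => //; exact: cast_ord_bij.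
Qed.

Lemma sum_neq_const (I : finType) (i : I) (c : nat) :
  \sum_(i' | i' != i) c = #|I|.-1 * c.
Proof. by rewrite sum_nat_const cardC1. Qed.

Lemma sum_neq_eq_const {I : finType} (F : I -> nat) {k : nat} :
  (forall i, \sum_(i' | i' != i) F i' = k) -> forall i, #|I|.-1 * F i = k.
Proof.
move=> Fk i.
have F_eq j : F j = \sum_i' F i' - k by rewrite (bigD1 j) //= Fk addnK.
by rewrite -(Fk i) (eq_bigr _ (fun j _ => F_eq j)) sum_neq_const (F_eq i).
Qed.

Lemma sum_copies (m : nat) (V : finType) (e : rel V) (c : 'I_m) (v : V)
    (F : 'I_m * V -> nat) :
  \sum_(w | copies m e (c, v) w) F w = \sum_(y | e v y) F (c, y).
Proof.
rewrite -(big_pred1_eq addn c (fun c' => \sum_(y | e v y) F (c', y))) pair_big_dep.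
by apply: eq_big => [[c' y] | [c' y] _] //=; rewrite /copies eq_sym.
Qed.

Lemma sum_lexprod_edgeless (X : finType) (adj : rel X) (n : nat) (x : X)
    (j : 'I_n) (F : X * 'I_n -> nat) :
  \sum_(w | lexprod adj (edgeless n) (x, j) w) F w =
  \sum_(x' | adj x x') \sum_j' F (x', j').
Proof.
rewrite pair_big_dep.
by apply: eq_big => [[x' j'] | [x' j'] _] //=; rewrite /lexprod andbF orbF andbT.
Qed.

Lemma sum_kronprod (X Y : finType) (adjX : rel X) (adjY : rel Y) (x : X) (y : Y)
    (F : X * Y -> nat) :
  \sum_(w | kronprod adjX adjY (x, y) w) F w =
  \sum_(x' | adjX x x') \sum_(y' | adjY y y') F (x', y').
Proof. by rewrite pair_big_dep; apply: eq_big => [[x' y'] | [x' y'] _]. Qed.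

Lemma sum_Hnp (n p : nat) (i : 'I_p) (j : 'I_n) (F : 'I_p * 'I_n -> nat) :
  \sum_(w | Hnp n p (i, j) w) F w = \sum_(i' | i' != i) \sum_j' F (i', j').
Proof.
rewrite pair_big_dep.
by apply: eq_big => [[i' j'] | [i' j'] _] //=; rewrite /Hnp andbT eq_sym.
Qed.

Section LexKron.

Context {a n p : nat} {V : finType} (e : rel V).
Context {sigma : 'I_a * 'I_p -> 'I_(a * p)}.
Hypotheses (sigma_bij : bijective sigma) (n_gt0 : 0 < n) (p_gt1 : 1 < p).

Definition to_lex (w : ('I_a * ('I_p * 'I_n)) * V) : ('I_(a * p) * V) * 'I_n :=
  let: ((b, (i, j)), v) := w in ((sigma (b, i), v), j).

Lemma to_lex_bij : bijective to_lex.
Proof.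
have [sigma' sigmaK sigmaK'] := sigma_bij.
exists (fun u => let: ((c, v), j) := u in (((sigma' c).1, ((sigma' c).2, j)), v)).
  by move=> [[b [i j]] v] /=; rewrite sigmaK.
by move=> [[c v] j] /=; rewrite -surjective_pairing sigmaK'.
Qed.

Variable l : ('I_(a * p) * V) * 'I_n -> nat.

Definition block_sum (c : 'I_(a * p)) (v : V) : nat :=
  \sum_(y | e v y) \sum_j l ((c, y), j).

Lemma weight_lex (c : 'I_(a * p)) (v : V) (j : 'I_n) :
  weight (lexprod (copies (a * p) e) (edgeless n)) l ((c, v), j) = block_sum c v.
Proof. by rewrite /weight sum_lexprod_edgeless sum_copies. Qed.

Lemma weight_kron (b : 'I_a) (i : 'I_p) (j : 'I_n) (v : V) :
  weight (kronprod (copies a (Hnp n p)) e) (l \o to_lex) ((b, (i, j)), v) =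
  \sum_(i' | i' != i) block_sum (sigma (b, i')) v.
Proof.
rewrite /weight sum_kronprod sum_copies sum_Hnp.
by apply: eq_bigr => i' _; rewrite exchange_big.
Qed.

Let j0 : 'I_n := Ordinal n_gt0.

Lemma constant_weight_lex :
  constant_weight (lexprod (copies (a * p) e) (edgeless n)) l <->
  exists k, forall c v, block_sum c v = k.
Proof.
split=> [[k wk] | [k bk]]; exists k.
  by move=> c v; rewrite -(wk ((c, v), j0)) weight_lex.
by move=> [[c v] j]; rewrite weight_lex.
Qed.

Lemma constant_weight_kron :
  constant_weight (kronprod (copies a (Hnp n p)) e) (l \o to_lex) <->
  exists k, forall b i v, \sum_(i' | i' != i) block_sum (sigma (b, i')) v = k.
Proof.
split=> [[k wk] | [k sk]]; exists k.
  by move=> b i v; rewrite -(wk ((b, (i, j0)), v)) weight_kron.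
by move=> [[b [i j]] v]; rewrite weight_kron.
Qed.

Lemma constant_weight_lex_kron :
  constant_weight (lexprod (copies (a * p) e) (edgeless n)) l <->
  constant_weight (kronprod (copies a (Hnp n p)) e) (l \o to_lex).
Proof.
split=> [/constant_weight_lex [k bk] | /constant_weight_kron [k sk]].
  apply/constant_weight_kron; exists (p.-1 * k) => b i v.
  by rewrite (eq_bigr (fun _ => k)) ?sum_neq_const ?card_ord.
apply/constant_weight_lex; exists (k %/ p.-1) => c v.
have [sigma' _ sigmaK'] := sigma_bij; rewrite -(sigmaK' c).
case: (sigma' c) => b i.
have := sum_neq_eq_const (fun i' => block_sum (sigma (b, i')) v) (sk b ^~ v) i.
by rewrite card_ord => <-; rewrite mulKn // ltn_predRL.
Qed.

End LexKron.

Theorem theorem16 (a n p : nat) (V : finType) (e : rel V) :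
  1 <= a -> 1 < n -> 1 < p ->
  simple_graph e -> regular e ->
  (distance_magic (lexprod (copies (a * p) e) (edgeless n)) <->
   distance_magic (kronprod (copies a (Hnp n p)) e)).
Proof.
move=> _ n_gt1 p_gt1 _ _.
have card_pairs : #|{: 'I_a * 'I_p}| = a * p by rewrite card_prod !card_ord.
have sigma_bij := bij_comp (cast_ord_bij card_pairs) (enum_rank_bij _).
have n_gt0 := ltnW n_gt1.
have lex_kron := constant_weight_lex_kron e sigma_bij n_gt0 p_gt1.
have relabel := distance_magic_bij (kronprod (copies a (Hnp n p)) e) _
  (to_lex_bij sigma_bij).
split=> [[f [f_bij f_const]] | /relabel [f [f_bij f_const]]].
  by apply/relabel; exists f; split=> //; apply/(lex_kron (fun x => (f x).+1)).
by exists f; split=> //; apply/(lex_kron (fun x => (f x).+1)).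
Qed.
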